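(* Let $d\ge1$, $k\in\mathbb N$, $K\in\mathbb R$, and let $\alpha_k$, $g_k$ and the admissible range of $n$ be as in the statement recalled in the context; in particular $\inf_k\alpha_k^{1/k}>0$. For any measurable $A\subset\mathcal C[K,K+d]$ and any admissible $n$, writing $a=\mathcal B^{[K,K+d]}_{1;0,0}(A)$, $$\mathbb P\big(\mathcal L_n^{[K,K+d]}(k,\cdot)\in A\big)\le a\cdot49\,e^{189\alpha_k^{-5}}\exp\Big\{\alpha_k^{-5/6}\Big(\log\big(a^{-1}(4g_k\vee1)\big)\Big)^{5/6}\Big\}.$$
   Context: Notation: $\wedge=\min$, $\vee=\max$. Setting: $\{\mathcal L_n:[\![1,n]\!]\times[-z_n,\infty)\to\mathbb R\}$ is a $\bar\varphi$-regular sequence of Brownian Gibbs line ensembles with constant parameters $(c,C)$, meaning: each $\mathcal L_n$ is ordered and its conditional law on $[\![1,k]\!]\times(a,b)$ given the rest is that of $k$ independent Brownian bridges (diffusion parameter one) between the observed endpoint values, conditioned to remain strictly ordered and above $\mathcal L_n(k+1,\cdot)$ (no lower constraint if $k=n$); and for every $n$: $z_n\ge cn^{\varphi_1}$; for $z\ge-z_n$ with $|z|\le cn^{\varphi_2}$, $\mathbb P(\mathcal L_n(1,z)+2^{-1/2}z^2\le-s)\le Ce^{-cs^{3/2}}$ for $s\in[1,n^{\varphi_3}]$ and $\mathbb P(\mathcal L_n(1,z)+2^{-1/2}z^2\ge s)\le Ce^{-cs^{3/2}}$ for $s\ge1$. $\mathcal C[K,K+d]$: continuous functions on $[K,K+d]$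 vanishing at the endpoints; $\mathcal B^{[K,K+d]}_{1;0,0}$: Brownian bridge law on $[K,K+d]$ vanishing at the endpoints; $\mathcal L_n^{[K,K+d]}(k,x)=\mathcal L_n(k,x)-\tfrac{K+d-x}{d}\mathcal L_n(k,K)-\tfrac{x-K}{d}\mathcal L_n(k,K+d)$. Constants: $c_1=2^{-5/2}c\wedge1/8$, $c_k=((3-2^{3/2})^{3/2}10^{-3/2})^{k-1}c_1$, $C_k=\max\{10\cdot20^{k-1}5^{k/2}(10/(3-2^{3/2}))^{k(k-1)/2}C,e^{c/2}\}$, $D_k=\max\{c_k^{-1/3}(2^{-9/2}-2^{-5})^{-1/3},36(k^2-1),32c_k^{-1}(k^2-1)\}$, $\theta=\varphi_1\wedge\varphi_2$, $\alpha_k=D_k^{-2/5}d^{-6/5}k^{-21/5}/46481$. An $n$ is admissible if $[K,K+d]\subset\tfrac c2[-n^\theta,n^\theta]$, $n\ge k\vee(2c)^{-2\theta^{-1}}\vee(2c^{-1}(K+d))^{1/\theta}$ and $n^{\varphi_1\wedge\varphi_2\wedge(\varphi_3/2)}\ge(c/2\wedge2^{1/2})^{-1}D_k(\log\varepsilon^{-1})^{1/3}$ with $2\varepsilon=18^{-3/2}C_k^{-3/2}D_k^{-3/2}\wedge\exp\{-2\cdot10^7k^{3/2}d^6\}$. With $f_{n,k}$ the Radon–Nikodym derivative of the law of $\mathcal L_n^{[K,K+d]}(k,\cdot)$ with respect to $\mathcal B^{[K,K+d]}_{1;0,0}$, $g_k=\sup_{n\text{ admissible}}\int\exp\{\alpha_k(\log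 f_{n,k})^{6/5}\}\,d\mathcal B^{[K,K+d]}_{1;0,0}$, which is finite. *)

From HB Require Import structures.
From mathcomp Require Import all_boot all_order all_algebra.
From mathcomp Require Import all_classical all_reals all_analysis.
Unset Printing Implicit Defensive.
Import Order.TTheory GRing.Theory Num.Theory.
Import numFieldNormedType.Exports.
Local Open Scope classical_set_scope.
Local Open Scope ring_scope.

Section defs.
Context {R : realType}.

(* C[K,K+d]: continuous functions on [K,K+d] vanishing at the endpoints;
   represented as functions R -> R that are continuous on [K,K+d], vanish at
   K and K+d, and (canonical extension) vanish outside [K,K+d]. *)
Definition is_cpath (K d : R) (f : R -> R) : Prop :=
  {within [set x | K <= x <= K + d], continuous f} /\ f K = 0 /\ f (K + d) = 0 /\
  (forall x, ~ (K <= x <= K + d) -> f x = 0).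

Lemma is_cpath0 K d : is_cpath K d (fun _ => 0).
Proof.
split; last by [].
by apply: continuous_subspaceT => x; exact: cst_continuous.
Qed.

Definition cpath (K d : R) := {f : R -> R | is_cpath K d f}.

HB.instance Definition _ K d := gen_eqMixin (cpath K d).
HB.instance Definition _ K d := gen_choiceMixin (cpath K d).
HB.instance Definition _ K d :=
  isPointed.Build (cpath K d) (exist _ (fun _ => 0) (is_cpath0 K d)).

(* cylinder sets: the sigma-algebra generated by the evaluation maps
   (this is the Borel sigma-algebra of the sup norm on C[K,K+d]) *)
Definition cpath_cyl (K d : R) : set (set (cpath K d)) :=
  [set (fun f : cpath K d => sval f t) @^-1` S | t in [set: R] & S in [set S : set R | measurable S]].

Definition cpathM (K d : R) := g_sigma_algebraType (cpath_cyl K d).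

Definition gaussian_law (m v : R) : set R -> \bar R :=
  if v == 0 then \d_m else normal_prob m (Num.sqrt v).

Definition bb_cov (K d s t : R) : R :=
  (Num.min s t - K) * (K + d - Num.max s t) / d.

(* B is the Brownian bridge law B^{[K,K+d]}_{1;0,0} (diffusion parameter one):
   the centred Gaussian process on [K,K+d] with covariance bb_cov, i.e. every
   finite linear combination of evaluations is centred Gaussian with the
   corresponding variance. *)
Definition is_brownian_bridge (K d : R) (B : probability (cpathM K d) R) : Prop :=
  forall (m : nat) (t : 'I_m -> R) (lam : 'I_m -> R),
    (forall i, K <= t i <= K + d) ->
    forall S : set R, measurable S ->
      B ((fun f : cpathM K d => \sum_(i < m) lam i * sval f (t i)) @^-1` S) =
      gaussian_law 0 (\sum_(i < m) \sum_(j < m) lam i * lam j * bb_cov K d (t i) (t j)) S.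

Definition c_1 (c : R) : R := Num.min (2 `^ (- (5 / 2)) * c) (1 / 8).
Definition c_k (c : R) (k : nat) : R :=
  ((3 - 2 `^ (3 / 2)) `^ (3 / 2) * 10 `^ (- (3 / 2))) ^+ k.-1 * c_1 c.
Definition C_k (c C : R) (k : nat) : R :=
  Num.max (10 * 20 ^+ k.-1 * 5 `^ (k%:R / 2)
             * (10 / (3 - 2 `^ (3 / 2))) `^ (k%:R * (k%:R - 1) / 2) * C)
          (expR (c / 2)).
Definition D_k (c : R) (k : nat) : R :=
  Num.max (Num.max ((c_k c k) `^ (- (1 / 3)) * (2 `^ (- (9 / 2)) - 2 `^ (-5)) `^ (- (1 / 3)))
                   (36 * (k%:R ^+ 2 - 1)))
          (32 * (c_k c k)^-1 * (k%:R ^+ 2 - 1)).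
Definition alpha_k (c d : R) (k : nat) : R :=
  (D_k c k) `^ (- (2 / 5)) * d `^ (- (6 / 5)) * k%:R `^ (- (21 / 5)) / (53 * 877).
Definition eps_k (c C d : R) (k : nat) : R :=
  Num.min (18 `^ (- (3 / 2)) * (C_k c C k) `^ (- (3 / 2)) * (D_k c k) `^ (- (3 / 2)))
          (expR (- (2 * 10 ^+ 7 * k%:R `^ (3 / 2) * d ^+ 6))) / 2.

Definition admissible (c C phi1 phi2 phi3 K d : R) (k n : nat) : Prop :=
  let theta := Num.min phi1 phi2 in
  [set x | K <= x <= K + d] `<=`
     [set x | - (c / 2 * n%:R `^ theta) <= x <= c / 2 * n%:R `^ theta] /\
  (k <= n)%N /\
  (2 * c) `^ (- (2 * theta^-1)) <= n%:R /\
  (2 * c^-1 * (K + d)) `^ (theta^-1) <= n%:R /\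
  (Num.min (c / 2) (Num.sqrt 2))^-1 * D_k c k * (ln ((eps_k c C d k)^-1)) `^ (1 / 3)
     <= n%:R `^ (Num.min (Num.min phi1 phi2) (phi3 / 2)).

End defs.

From HB Require Import structures.
From mathcomp Require Import all_boot all_order all_algebra.
From mathcomp Require Import all_classical all_reals all_analysis.
From mathcomp Require Import ring lra.
From mathcomp Require Import measurable_realfun.
Import Order.TTheory GRing.Theory Num.Theory.
Import numFieldNormedType.Exports.
Local Open Scope classical_set_scope.
Local Open Scope ring_scope.

(* Let [l = log (a^-1 (4 g \/ 1))] and let [T] be the threshold
   [alpha^(-5/6) l^(5/6) + alpha^(-5)].  Where the density [f] exceeds [e^T],
   the superlinear growth of [y |-> alpha y^(6/5)] beyond [T] gives
   [log f + l <= T + alpha (log f)^(6/5)], so pointwise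
   [f <= e^T + e^(T - l) exp(alpha (log f)_+^(6/5))].  Integrating over [A]
   and using that the exponential moment is at most [g] yields
   [P(A) <= e^T a + e^T a g / (4 g \/ 1) <= 5/4 e^T a]. *)

Section alpha_k_positivity.
Context {R : realType}.

Lemma powR_gt0_neq0 (a x : R) : a != 0 -> 0 < a `^ x.
Proof. by move=> a0; rewrite lt_neqAle powR_ge0 eq_sym powR_eq0 (negbTE a0). Qed.

Lemma powR2_3half_neq3 : (2 : R) `^ (3 / 2) != 3.
Proof.
apply/eqP => h.
have : ((2 : R) `^ (3 / 2)) `^ 2 = 3 `^ 2 by rewrite h.
rewrite -powRrM (_ : 3 / 2 * 2 = 3%:R :> R); last by field.
rewrite !powR_mulrn // => /eqP; rewrite -subr_eq0; apply/negP.
rewrite (_ : 2 ^+ 3 - 3 ^+ 2 = -1 :> R) ?oppr_eq0 ?oner_eq0 //.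
by rewrite !exprS expr0; lra.
Qed.

Lemma powR2_sub_neq0 : (2 : R) `^ (- (9 / 2)) - 2 `^ (-5) != 0.
Proof.
rewrite subr_eq0 /powR pnatr_eq0 /=; apply/negP => /eqP /expR_inj /eqP.
rewrite -subr_eq0 -mulrBl mulf_eq0 => /orP[/eqP|/eqP]; first lra.
move=> h; have : (0 : R) < ln 2 by apply: ln_gt0; lra.
lra.
Qed.

Lemma c_k_neq0 (c : R) k : 0 < c -> c_k c k != 0.
Proof.
move=> c0; rewrite /c_k mulf_neq0 //.
  rewrite expf_neq0 // mulf_neq0 //.
  apply/negP => /eqP/powR_eq0_eq0/eqP; rewrite subr_eq0 eq_sym.
  exact/negP/powR2_3half_neq3.
by rewrite gt_eqF // /c_1 lt_min mulr_gt0 ?powR_gt0 //=.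
Qed.

Lemma D_k_gt0 (c : R) k : 0 < c -> 0 < D_k c k.
Proof.
move=> c0; rewrite /D_k !lt_max mulr_gt0 //.
  exact/powR_gt0_neq0/c_k_neq0.
exact/powR_gt0_neq0/powR2_sub_neq0.
Qed.

Lemma alpha_k_gt0 (c d : R) k : 0 < c -> 0 < d -> (0 < k)%N -> 0 < alpha_k c d k.
Proof.
move=> c0 d0 k0; rewrite /alpha_k.
apply: divr_gt0; last lra.
by rewrite !mulr_gt0 // powR_gt0 ?ltr0n // D_k_gt0.
Qed.

End alpha_k_positivity.

Section threshold.
Context {R : realType}.
Implicit Types al l y v : R.

Definition threshold al l : R := al `^ (- (5 / 6)) * l `^ (5 / 6) + al `^ (-5).

Lemma threshold_gt0 al l : 0 < al -> 0 < threshold al l.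
Proof.
by move=> al0; rewrite /threshold ltr_wpDl ?mulr_ge0 ?powR_ge0 ?powR_gt0.
Qed.

(* For [y >= T := threshold al l] one has [al y^(6/5) >= al T^(1/5) y] with
   [al T^(1/5) >= 1] because [T >= al^-5], and [al u^(6/5) = l] for the
   first summand [u] of [T]. *)
Lemma threshold_exponent_bound al l y : 0 < al -> 0 <= l ->
  threshold al l < y -> y + l <= threshold al l + al * y `^ (6 / 5).
Proof.
move=> al0 l0; rewrite /threshold.
set u := al `^ (- (5 / 6)) * l `^ (5 / 6); set w := al `^ (-5).
have w0 : 0 < w by rewrite powR_gt0.
set T := u + w => Ty.
have uT : u <= T by rewrite lerDl ltW.
have T0 : 0 < T by rewrite ltr_wpDl // mulr_ge0 ?powR_ge0.
have y0 : 0 < y := lt_trans T0 Ty.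
have powR_mono (r s t : R) : 0 <= r -> 0 <= s -> s <= t -> s `^ r <= t `^ r.
  by move=> r0 s0 st; apply: ge0_ler_powR; rewrite ?nnegrE // (le_trans s0 st).
have pow65 (t : R) : 0 <= t -> t `^ (6 / 5) = t `^ (1 / 5) * t.
  move=> t0; rewrite (_ : 6 / 5 = 1 / 5 + 1 :> R); last by field.
  by rewrite powRD ?powRr1 //; apply/implyP => /eqP; lra.
have slope_ge1 : 1 <= al * T `^ (1 / 5).
  have w5 : w `^ (1 / 5) = al^-1.
    rewrite -powRrM (_ : -5 * (1 / 5) = -1 :> R); last by field.
    by rewrite powR_inv1 ?ltW.
  rewrite -[X in X <= _](mulfV (lt0r_neq0 al0)) -w5 ler_pM2l //.
  by rewrite powR_mono ?(ltW w0) // /T lerDr mulr_ge0 ?powR_ge0.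
have value_at_u : al * u `^ (6 / 5) = l.
  rewrite powRM ?powR_ge0 // -!powRrM.
  rewrite (_ : - (5 / 6) * (6 / 5) = -1 :> R); last by field.
  rewrite (_ : 5 / 6 * (6 / 5) = 1 :> R); last by field.
  by rewrite powR_inv1 ?ltW // powRr1 // mulrA mulfV ?mul1r // lt0r_neq0.
have lT : l <= al * T `^ (6 / 5).
  rewrite -[X in X <= _]value_at_u ler_pM2l //.
  by rewrite powR_mono // mulr_ge0 ?powR_ge0.
rewrite pow65 ?(ltW T0) // in lT.
apply: le_trans (_ : T + al * (T `^ (1 / 5) * y) <= _); last first.
  rewrite lerD2l pow65 ?(ltW y0) // ler_pM2l // ler_pM2r //.
  by rewrite powR_mono // ltW.
apply: le_trans (_ : y + al * (T `^ (1 / 5) * T) <= _); first by rewrite lerD2l.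
rewrite -subr_ge0.
have -> : T + al * (T `^ (1 / 5) * y) - (y + al * (T `^ (1 / 5) * T)) =
  (al * T `^ (1 / 5) - 1) * (y - T) by ring.
by apply: mulr_ge0; rewrite subr_ge0 // ltW.
Qed.

Lemma le_threshold_split al l v : 0 < al -> 0 <= l ->
  v <= expR (threshold al l)
       + expR (threshold al l - l) * expR (al * (Num.max (ln v) 0) `^ (6 / 5)).
Proof.
move=> al0 l0; set T := threshold al l.
have tail0 : 0 <= expR (T - l) * expR (al * (Num.max (ln v) 0) `^ (6 / 5)).
  by rewrite mulr_ge0 ?expR_ge0.
have [vT|Tv] := leP v (expR T); first lra.
have vpos : v \is Num.pos by rewrite posrE (lt_trans (expR_gt0 T)).
have T_lnv : T < ln v by rewrite -ltr_expR lnK.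
have lnv0 : 0 < ln v := lt_trans (threshold_gt0 al l al0) T_lnv.
rewrite (max_l (ltW lnv0)) -expRD.
apply: ler_wpDl; first exact: expR_ge0.
rewrite -{1}(lnK vpos) ler_expR.
by have := threshold_exponent_bound _ _ _ al0 l0 T_lnv; rewrite -/T; lra.
Qed.

End threshold.

Lemma affine_bound_le_target (R : realType) (a g G u w : R) :
  0 <= a -> 0 < G -> 4 * g <= G -> 0 <= w ->
  expR (u + w) * a + expR (u + w) * a / G * g
    <= a * 49 * expR (189 * w) * expR u.
Proof.
move=> a0 G0 gG w0.
have e0 : 0 <= expR u * expR w * a by rewrite !mulr_ge0 ?expR_ge0.
have gG' : g / G <= 1 / 4 by rewrite ler_pdivrMr //; lra.
have : expR u * expR w * a * (g / G) <= expR u * expR w * a * (1 / 4).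
  exact: ler_wpM2l.
have : expR u * expR w * a <= expR u * expR (189 * w) * a.
  by rewrite ler_wpM2r // ler_wpM2l ?expR_ge0 // ler_expR; lra.
rewrite expRD; nra.
Qed.

Section integral_affine_bound.
Context {d} {T : measurableType d} {R : realType}.

Lemma integral_le_affine (mu : {measure set T -> \bar R}) (A : set T)
    (h phi : T -> R) (s t : R) :
  measurable A -> measurable_fun [set: T] h -> measurable_fun [set: T] phi ->
  (forall x, 0 <= h x) -> (forall x, 0 <= phi x) -> 0 <= s -> 0 <= t ->
  (forall x, h x <= s + t * phi x) ->
  (\int[mu]_(x in A) (h x)%:E <= s%:E * mu A + t%:E * \int[mu]_x (phi x)%:E)%E.
Proof.
move=> mA mh mphi h0 phi0 s0 t0 hle.
have mhA := measurable_funS measurableT (@subsetT _ A) mh.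
have mphiA := measurable_funS measurableT (@subsetT _ A) mphi.
apply: (@le_trans _ _ (\int[mu]_(x in A) (s + t * phi x)%:E)%E).
  apply: ge0_le_integral => //.
  - by move=> x _; rewrite lee_fin.
  - exact/measurable_EFinP.
  - apply/measurable_EFinP.
    by apply: measurable_funD => //; apply: measurable_funM.
  - by move=> x _; rewrite lee_fin.
under eq_integral do rewrite EFinD.
rewrite ge0_integralD //; last 2 first.
- by move=> x _; rewrite lee_fin mulr_ge0.
- by apply/measurable_EFinP; apply: measurable_funM.
rewrite [X in (_ + X <= _)%E](eq_integral (fun x => (t%:E * (phi x)%:E)%E));
  last by move=> x _; rewrite EFinM.
rewrite integral_cst // ge0_integralZl_EFin //; last 2 first.
- by move=> x _; rewrite lee_fin.
- exact/measurable_EFinP.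
rewrite leeD2l // lee_wpmul2l ?lee_fin //.
apply: ge0_subset_integral => //; first exact/measurable_EFinP.
by move=> x _; rewrite lee_fin.
Qed.

Lemma measurable_exp_log_moment (al : R) (h : T -> R) :
  measurable_fun [set: T] h ->
  measurable_fun [set: T]
    (fun x => expR (al * (Num.max (ln (h x)) 0) `^ (6 / 5))).
Proof.
move=> mh; apply: measurableT_comp; first exact: measurable_expR.
apply: (measurableT_comp (mulrl_measurable al)).
apply: (measurableT_comp (@measurable_powR R (6 / 5))).
exact: measurable_maxr (measurableT_comp (@measurable_ln R) mh)
  (measurable_cst _).
Qed.

Lemma le_integral_of_exp_log_moment (mu : {measure set T -> \bar R})
    (A : set T) (h : T -> R) (al g a : R) :
  measurable A -> measurable_fun [set: T] h -> (forall x, 0 <= h x) -> 0 < al ->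
  mu A = a%:E -> 0 <= a <= 1 ->
  (\int[mu]_x (expR (al * (Num.max (ln (h x)) 0) `^ (6 / 5)))%:E <= g%:E)%E ->
  (\int[mu]_(x in A) (h x)%:E <=
    (a * 49 * expR (189 * al `^ (-5))
       * expR (al `^ (- (5 / 6))
               * (ln (a^-1 * Num.max (4 * g) 1)) `^ (5 / 6)))%:E)%E.
Proof.
move=> mA mh h0 al0 muA /andP[a0 a1] moment_le_g.
have [a_eq0|a_neq0] := eqVneq a 0.
  rewrite a_eq0 !mul0r null_set_integral ?muA ?a_eq0 //.
  exact/measurable_EFinP/(measurable_funS measurableT (@subsetT _ A)).
have a_gt0 : 0 < a by rewrite lt_neqAle eq_sym a_neq0.
set G := Num.max (4 * g) 1; set l := ln (a^-1 * G).
have G1 : 1 <= G by rewrite le_max lexx orbT.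
have aG_pos : a^-1 * G \is Num.pos.
  by rewrite posrE mulr_gt0 ?invr_gt0 // (lt_le_trans ltr01 G1).
have l0 : 0 <= l by rewrite ln_ge0 // -[1]mulr1 ler_pM // invf_ge1.
apply: le_trans (integral_le_affine mu _ _ _ _ _ mA mh
  (measurable_exp_log_moment al _ mh) h0 (fun _ => expR_ge0 _) (expR_ge0 _)
  (expR_ge0 _) (fun x => le_threshold_split _ _ _ al0 l0)) _.
rewrite muA; apply: le_trans (leeD2l _ (lee_wpmul2l _ moment_le_g)) _.
  by rewrite lee_fin expR_ge0.
have -> : expR (threshold al l - l) = expR (threshold al l) * a / G.
  by rewrite expRD expRN lnK // invfM invrK mulrA.
rewrite -!EFinM -EFinD lee_fin /threshold.
apply: affine_bound_le_target; rewrite ?powR_ge0 ?le_max ?lexx //; lra.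
Qed.

End integral_affine_bound.

Theorem corollary4p6 (R : realType)
  (c C phi1 phi2 phi3 : R) (z : nat -> R)
  (dO : nat -> measure_display) (Omega : forall n : nat, measurableType (dO n))
  (P : forall n : nat, probability (Omega n) R)
  (L : forall n : nat, Omega n -> nat -> R -> R)
  (K d : R) (k : nat)
  (B : probability (cpathM K d) R)
  (X : forall n : nat, Omega n -> cpathM K d)
  (f : nat -> cpathM K d -> R) :
  0 < c -> 0 < C -> 0 < phi1 -> 0 < phi2 -> 0 < phi3 ->
  (* the line ensembles L_n : [1,n] x [-z_n, oo) -> R *)
  (forall n, c * n%:R `^ phi1 <= z n) ->
  (forall n i x, measurable_fun [set: Omega n] (fun w => L n w i x)) ->
  (forall n w i, (1 <= i <= n)%N -> {within [set x | - z n <= x], continuous (L n w i)}) ->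
  (forall n w i x, (1 <= i)%N -> (i < n)%N -> - z n <= x -> L n w i.+1 x < L n w i x) ->
  (* one-point tail bounds *)
  (forall n x, - z n <= x -> `|x| <= c * n%:R `^ phi2 ->
     (forall s, 1 <= s <= n%:R `^ phi3 ->
        (P n [set w | (L n w 1%N x + 2 `^ (- (1 / 2)) * x ^+ 2 <= - s)%R]
          <= (C * expR (- (c * s `^ (3 / 2))))%:E)%E) /\
     (forall s, 1 <= s ->
        (P n [set w | (s <= L n w 1%N x + 2 `^ (- (1 / 2)) * x ^+ 2)%R]
          <= (C * expR (- (c * s `^ (3 / 2))))%:E)%E)) ->
  (* parameters *)
  1 <= d -> (1 <= k)%N ->
  is_brownian_bridge K d B ->
  (* X n = L_n^{[K,K+d]}(k, .) *)
  (forall n w x, K <= x <= K + d ->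
     sval (X n w) x = L n w k x - (K + d - x) / d * L n w k K - (x - K) / d * L n w k (K + d)) ->
  (forall n, measurable_fun [set: Omega n] (X n)) ->
  (* f n = f_{n,k}: Radon-Nikodym derivative of the law of X n w.r.t. B *)
  (forall n, measurable_fun [set: cpathM K d] (f n)) ->
  (forall n x, 0 <= f n x) ->
  (forall n (A : set (cpathM K d)), measurable A ->
     P n (X n @^-1` A) = (\int[B]_(x in A) (f n x)%:E)%E) ->
  forall g : R,
  ereal_sup [set (\int[B]_x (expR (alpha_k c d k
                     * (Num.max (ln (f n x)) 0) `^ (6 / 5)))%:E)%E
            | n in admissible c C phi1 phi2 phi3 K d k] = g%:E ->
  forall (A : set (cpathM K d)) (n : nat), measurable A ->
  admissible c C phi1 phi2 phi3 K d k n ->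
  let a := fine (B A) in
  (P n (X n @^-1` A) <=
     (a * 49 * expR (189 * (alpha_k c d k) `^ (-5))
        * expR ((alpha_k c d k) `^ (- (5 / 6))
                * (ln (a^-1 * Num.max (4 * g) 1)) `^ (5 / 6)))%:E)%E.
Proof.
(* The line-ensemble hypotheses only serve, in the paper, to make [g] finite. *)
move=> c0 _ _ _ _ _ _ _ _ _ d1 k1 _ _ _ mf f0 Pf g sup_g A n mA adm_n /=.
have BAa : B A = (fine (B A))%:E.
  by rewrite fineK // ge0_fin_numE // (le_lt_trans (probability_le1 _ mA)) ?ltry.
rewrite Pf //; apply: le_integral_of_exp_log_moment => //.
- by apply: alpha_k_gt0 => //; lra.
- by rewrite -!lee_fin -BAa measure_ge0 probability_le1.
- by rewrite -sup_g; apply: ereal_sup_ubound; exists n.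
Qed.
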